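(* Define $\phi:\mathrm{PSL}(2,\mathbb{Z})\to\mathbb{C}$ by $\phi(\gamma)=(\mathcal{R}(\gamma;z_q)+2\lambda^2)\,f(\gamma z_q)$, where $f(w)=\frac{i(w-z_q)}{w-\overline{z_q}}$. Then every point in the image of $\phi$ has exactly $|\mathrm{Stab}_{\mathrm{PSL}(2,\mathbb{Z})}(z_q)|$ preimages, and this number equals $\frac12|\mathcal{O}_K^\times|$.
   Context: Let $q\in\{3,4,7,8,11,19,43,67,163\}$, $K$ the imaginary quadratic field of discriminant $-q$ (class number one), $\mathcal{O}_K$ its ring of integers, $\mathcal{O}_K^\times$ its unit group. Let $z_q=\mu+i\lambda$ with $\mu=0$ if $q\in\{4,8\}$, $\mu=1/2$ otherwise, $\lambda=\sqrt{q}/2$. $\mathbb{H}$ is the upper half-plane with hyperbolic distance $\rho$, $\cosh\rho(z,w)=1+\frac{|z-w|^2}{2\,\mathrm{Im}(z)\mathrm{Im}(w)}$, and $\mathrm{PSL}(2,\mathbb{Z})$ acts by Möbius transformations; $\mathcal{R}(\gamma;z_q)=2\lambda^2\cosh\rho(z_q,\gamma z_q)$. *)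

From mathcomp Require Import all_boot all_order all_algebra.
From mathcomp Require Import complex Rstruct.
From Stdlib Require Rdefinitions.
Set Implicit Arguments. Unset Strict Implicit. Unset Printing Implicit Defensive.
Import Order.TTheory GRing.Theory Num.Theory.
Local Open Scope ring_scope.

Notation RR := Rdefinitions.R.
Notation CC := (RR[i]).

(* the nine class-number-one discriminants -q *)
Definition admissible_q (q : nat) : bool :=
  q \in [:: 3; 4; 7; 8; 11; 19; 43; 67; 163]%N.

Definition mu (q : nat) : RR := if q \in [:: 4; 8]%N then 0 else 2^-1.
Definition lambda (q : nat) : RR := Num.sqrt (q%:R) / 2.
Definition zq (q : nat) : CC := Complex (mu q) (lambda q).

(* PSL(2,Z): each class {M, -M} of SL(2,Z) is represented by the unique
   matrix (a b; c d) with ad - bc = 1 and (c > 0, or c = 0 and d > 0). *)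
Definition psl_rep (m : int * int * int * int) : bool :=
  let: (a, b, c, d) := m in
  (a * d - b * c == 1) && ((0 < c) || ((c == 0) && (0 < d))).
Definition PSL2Z := {m : int * int * int * int | psl_rep m}.

Definition mob (g : PSL2Z) (z : CC) : CC :=
  let: (a, b, c, d) := val g in
  (a%:~R * z + b%:~R) / (c%:~R * z + d%:~R).

Definition abs2 (z : CC) : RR := complex.Re z ^+ 2 + complex.Im z ^+ 2.
Definition cosh_rho (z w : CC) : RR :=
  1 + abs2 (z - w) / (2 * complex.Im z * complex.Im w).

Definition Rq (q : nat) (g : PSL2Z) : RR :=
  2 * lambda q ^+ 2 * cosh_rho (zq q) (mob g (zq q)).

Definition fq (q : nat) (w : CC) : CC :=
  'i%C * (w - zq q) / (w - conjc (zq q)).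

Definition phi (q : nat) (g : PSL2Z) : CC :=
  ((Rq q g + 2 * lambda q ^+ 2)%:C)%C * fq q (mob g (zq q)).

Definition Stab (q : nat) (g : PSL2Z) : Prop := mob g (zq q) = zq q.

(* K = Q(sqrt(-q)) = Q(z_q) inside C, O_K its ring of integers
   (elements of K that are roots of a monic integer polynomial),
   O_K^x its unit group. *)
Definition inK (q : nat) (x : CC) : Prop :=
  exists a b : rat, x = ratr a + ratr b * zq q.
Definition alg_integer (x : CC) : Prop :=
  exists p : {poly int}, p \is monic /\ root (map_poly (fun z : int => z%:~R : CC) p) x.
Definition OK (q : nat) (x : CC) : Prop := inK q x /\ alg_integer x.
Definition OK_unit (q : nat) (x : CC) : Prop :=
  OK q x /\ x != 0 /\ OK q x^-1.

Definition has_card (T : eqType) (P : T -> Prop) (n : nat) : Prop :=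
  exists s : seq T, uniq s /\ (forall x, x \in s <-> P x) /\ size s = n.

(* A matrix (a, b; c, d) fixes z_q exactly when a = t c + d and b = - N c, where
   z_q^2 = t z_q - N; its determinant is then the norm d^2 + t d c + N c^2 of
   d + c z_q. Hence the stabiliser of z_q in PSL(2,Z) and the units of O_K = Z[z_q]
   modulo sign are both read off the finitely many solutions of the norm equation.
   Since phi(gamma) = Phi(gamma z_q) with Phi injective on the upper half-plane,
   the fibres of phi are the cosets gamma Stab. That every unit of O_K has integral
   coordinates and norm one follows from the integrality of its traces, computed
   through an embedding of K into the algebraic numbers. *)

From mathcomp Require Import all_boot all_order all_algebra all_field.
From mathcomp Require Import complex Rstruct.
From mathcomp Require Import ring lra zify.
Set Implicit Arguments. Unset Strict Implicit. Unset Printing Implicit Defensive.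
Import Order.TTheory GRing.Theory Num.Theory.
Local Open Scope ring_scope.

Lemma complexE (u : CC) : u = Complex (complex.Re u) (complex.Im u).
Proof. by case: u. Qed.

Lemma complex_ext (u v : CC) :
  complex.Re u = complex.Re v -> complex.Im u = complex.Im v -> u = v.
Proof. by case: u; case: v => /= ? ? ? ? -> ->. Qed.

Lemma intrC (k : int) : (k%:~R : CC) = Complex k%:~R 0.
Proof. by rewrite -(rmorph_int (real_complex RR)). Qed.

Lemma ratrC (r : rat) : (ratr r : CC) = Complex (ratr r) 0.
Proof. by rewrite -(fmorph_rat (real_complex RR)). Qed.

Lemma abs2M (u v : CC) : abs2 (u * v) = abs2 u * abs2 v.
Proof. by rewrite /abs2 (complexE u) (complexE v) /=; ring. Qed.

Lemma abs2_ge0 (u : CC) : 0 <= abs2 u.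
Proof. by rewrite /abs2 addr_ge0 ?sqr_ge0. Qed.

Lemma abs2_gt0 (u : CC) : u != 0 -> 0 < abs2 u.
Proof.
rewrite lt_def abs2_ge0 andbT; apply: contra => /eqP.
rewrite /abs2 => /eqP; rewrite paddr_eq0 ?sqr_ge0 // !sqrf_eq0 => /andP[/eqP re /eqP im].
by rewrite (complexE u) re im.
Qed.

(** * The point z_q *)

(* z_q is a root of X^2 - t X + N with t = 2 mu and N = |z_q|^2 = (q + t) / 4. *)
Definition tq (q : nat) : int := if q \in [:: 4; 8]%N then 0 else 1.
Definition Nq (q : nat) : int := ((q + absz (tq q)) %/ 4)%N.

Ltac case_admissible hq := move: hq; rewrite /admissible_q !inE;
  do ![case/orP=> [/eqP->|]]; last move/eqP->.

Lemma tq_Nq q : admissible_q q ->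
  [/\ tq q = 0 \/ tq q = 1, 4 * Nq q = q%:Z + tq q & (3 <= q <= 163)%N].
Proof. by move=> hq; case_admissible hq; rewrite /tq /Nq /=; split; auto. Qed.

Lemma tqK q : admissible_q q -> tq q * tq q = tq q.
Proof. by case/tq_Nq => [[->|->] _]. Qed.

Lemma mu_tq q : admissible_q q -> mu q = (tq q)%:~R / 2.
Proof. by move=> hq; case_admissible hq; rewrite /mu /tq /= ?mul0r ?mul1r. Qed.

Lemma lambda_sqr q : lambda q ^+ 2 = q%:R / 4.
Proof. by rewrite /lambda expr_div_n sqr_sqrtr ?ler0n // -natrX. Qed.

Lemma lambda_gt0 q : admissible_q q -> 0 < lambda q.
Proof.
case/tq_Nq=> _ _ /andP[q3 _].
by rewrite /lambda divr_gt0 // sqrtr_gt0 ltr0n (leq_trans _ q3).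
Qed.

Lemma Nq_intr (F : numFieldType) q : admissible_q q ->
  (Nq q)%:~R = (q%:R + (tq q)%:~R) / 4 :> F.
Proof.
move=> hq; have [_ hN _] := tq_Nq hq.
by rewrite -[q%:R]/(q%:Z%:~R) -intrD -hN intrM; field.
Qed.

Lemma zq_sqr q : admissible_q q -> zq q ^+ 2 = (tq q)%:~R * zq q - (Nq q)%:~R.
Proof.
move=> hq; rewrite expr2 /zq (mu_tq hq) !intrC (Nq_intr _ hq).
apply: complex_ext => /=; rewrite -?[lambda q * lambda q]expr2 ?lambda_sqr //.
all: by case: (tq_Nq hq) => -[->|->] _ _; field.
Qed.

Lemma zq_coord_eq0 q (a b : rat) : admissible_q q ->
  ratr a + ratr b * zq q = 0 -> a = 0 /\ b = 0.
Proof.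
rewrite /zq !ratrC => hq e; move: (congr1 (@complex.Re _) e) (congr1 (@complex.Im _) e).
rewrite /= !mul0r subr0 add0r addr0 => /[swap] /eqP; rewrite mulf_eq0 (gt_eqF (lambda_gt0 hq)) orbF fmorph_eq0 => /eqP ->.
by rewrite rmorph0 mul0r addr0 => /eqP; rewrite fmorph_eq0 => /eqP.
Qed.

Lemma zq_coord_inj q (a b a' b' : int) : admissible_q q ->
  a%:~R + b%:~R * zq q = a'%:~R + b'%:~R * zq q -> a = a' /\ b = b'.
Proof.
move=> hq /eqP; rewrite -subr_eq0 => /eqP e.
have /(zq_coord_eq0 hq) [] : ratr (a - a')%:~R + ratr (b - b')%:~R * zq q = 0.
  by rewrite !ratr_int !intrB -e; ring.
by move=> /eqP; rewrite intr_eq0 subr_eq0 => /eqP -> /eqP; rewrite intr_eq0 subr_eq0 => /eqP.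
Qed.

(** * Integer matrices acting on the upper half-plane *)

Definition mat := (int * int * int * int)%type.

Definition mobm (m : mat) (z : CC) : CC :=
  let: (a, b, c, d) := m in (a%:~R * z + b%:~R) / (c%:~R * z + d%:~R).
Definition detm (m : mat) : int := let: (a, b, c, d) := m in a * d - b * c.
Definition mulm (m1 m2 : mat) : mat :=
  let: (a1, b1, c1, d1) := m1 in let: (a2, b2, c2, d2) := m2 in
  (a1 * a2 + b1 * c2, a1 * b2 + b1 * d2, c1 * a2 + d1 * c2, c1 * b2 + d1 * d2).
Definition adjm (m : mat) : mat := let: (a, b, c, d) := m in (d, - b, - c, a).
Definition negm (m : mat) : mat := let: (a, b, c, d) := m in (- a, - b, - c, - d).
Definition idm : mat := (1, 0, 0, 1).

Definition normm (m : mat) : mat :=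
  let: (a, b, c, d) := m in if (0 < c) || ((c == 0) && (0 < d)) then m else negm m.

Lemma mobE (g : PSL2Z) z : mob g z = mobm (val g) z.
Proof. by []. Qed.

Lemma Im_mobm (a b c d : int) (z : CC) : complex.Im (mobm (a, b, c, d) z) =
  (a * d - b * c)%:~R * complex.Im z / abs2 (c%:~R * z + d%:~R).
Proof.
rewrite /mobm /abs2 (complexE z) !intrC /= intrB !intrM.
by move: (complex.Re z) (complex.Im z) (a%:~R) (b%:~R) (c%:~R) (d%:~R) => *; ring.
Qed.

Lemma detm_cd_neq0 (m : mat) : detm m = 1 -> let: (a, b, c, d) := m in (c != 0) || (d != 0).
Proof. by case: m => [[[a b] c] d] /=; lia. Qed.

Lemma mob_den_neq0 (c d : int) (z : CC) : complex.Im z != 0 -> (c != 0) || (d != 0) ->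
  c%:~R * z + d%:~R != 0.
Proof.
move=> hz; apply: contraTT; rewrite negbK negb_or !negbK => /eqP e.
move: (congr1 (@complex.Im _) e) (congr1 (@complex.Re _) e).
rewrite (complexE z) !intrC /= !mul0r !addr0 => /eqP; rewrite mulf_eq0 (negbTE hz) orbF.
by rewrite intr_eq0 => /eqP c0; rewrite c0 mul0r subr0 add0r => /eqP; rewrite intr_eq0 eqxx.
Qed.

Lemma Im_mobm_gt0 (m : mat) (z : CC) : 0 < complex.Im z -> detm m = 1 ->
  0 < complex.Im (mobm m z).
Proof.
case: m => [[[a b] c] d] hz hdet; rewrite Im_mobm.
have -> : a * d - b * c = 1 by [].
by rewrite mul1r divr_gt0 // abs2_gt0 // mob_den_neq0 ?(lt0r_neq0 hz) ?(detm_cd_neq0 hdet).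
Qed.

Lemma mobm_mul (m1 m2 : mat) (z : CC) : 0 < complex.Im z -> detm m1 = 1 -> detm m2 = 1 ->
  mobm (mulm m1 m2) z = mobm m1 (mobm m2 z).
Proof.
move=> hz h1 h2; have hw := Im_mobm_gt0 hz h2.
move: (detm_cd_neq0 h1) (detm_cd_neq0 h2) hw.
case: m1 h1 => [[[a1 b1] c1] d1] _; case: m2 h2 => [[[a2 b2] c2] d2] _ n1 n2.
have e2 := mob_den_neq0 (lt0r_neq0 hz) n2.
rewrite /mulm /mobm !intrD !intrM => /lt0r_neq0 /mob_den_neq0 /(_ n1).
move: (a1%:~R) (b1%:~R) (c1%:~R) (d1%:~R) (a2%:~R) (b2%:~R) (c2%:~R) (d2%:~R) e2.
move=> A1 B1 C1 D1 A2 B2 C2 D2 e2; set w := (A2 * z + B2) / (C2 * z + D2) => e1.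
have eD : (C1 * A2 + D1 * C2) * z + (C1 * B2 + D1 * D2) = (C1 * w + D1) * (C2 * z + D2).
  by rewrite /w; field.
have eN : (A1 * A2 + B1 * C2) * z + (A1 * B2 + B1 * D2) = (A1 * w + B1) * (C2 * z + D2).
  by rewrite /w; field.
by rewrite eD eN; field; rewrite e1 e2.
Qed.

Lemma mobm_neg (m : mat) (z : CC) : mobm (negm m) z = mobm m z.
Proof.
case: m => [[[a b] c] d]; rewrite /mobm /negm !intrN !mulNr -!opprD.
by rewrite invrN mulrNN.
Qed.

Lemma mobm_id (z : CC) : mobm idm z = z.
Proof. by rewrite /mobm /idm mul1r mul0r add0r addr0 divr1. Qed.

Lemma mobm_normm m z : mobm (normm m) z = mobm m z.
Proof. by case: m => [[[a b] c] d]; rewrite /normm; case: ifP => // _; apply: mobm_neg. Qed.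

Lemma mulmA m1 m2 m3 : mulm (mulm m1 m2) m3 = mulm m1 (mulm m2 m3).
Proof.
case: m1 => [[[a1 b1] c1] d1]; case: m2 => [[[a2 b2] c2] d2]; case: m3 => [[[a3 b3] c3] d3].
by congr (_, _, _, _); rewrite /=; ring.
Qed.

Lemma mul1m m : mulm idm m = m.
Proof. by case: m => [[[a b] c] d] /=; congr (_, _, _, _); lia. Qed.

Lemma mulmN m s : mulm m (negm s) = negm (mulm m s).
Proof. by case: m => [[[a b] c] d]; case: s => [[[a' b'] c'] d'] /=; congr (_, _, _, _); lia. Qed.

Lemma mul_adjm m : detm m = 1 -> mulm (adjm m) m = idm /\ mulm m (adjm m) = idm.
Proof. by case: m => [[[a b] c] d] /= h; split; congr (_, _, _, _); lia. Qed.

Lemma detmM m1 m2 : detm (mulm m1 m2) = detm m1 * detm m2.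
Proof. by case: m1 => [[[a1 b1] c1] d1]; case: m2 => [[[a2 b2] c2] d2] /=; ring. Qed.

Lemma detm_adj m : detm (adjm m) = detm m.
Proof. by case: m => [[[a b] c] d] /=; ring. Qed.

Lemma psl_detm m : psl_rep m -> detm m = 1.
Proof. by case: m => [[[a b] c] d] /= /andP[/eqP]. Qed.

Lemma normm_psl m : detm m = 1 -> psl_rep (normm m).
Proof.
case: m => [[[a b] c] d] /= h; have := detm_cd_neq0 (m := (a, b, c, d)) h.
by case: ifP => /= hc hcd; rewrite ?h ?eqxx //; apply/andP; split; [apply/eqP|]; lia.
Qed.

Lemma normm_id m : psl_rep m -> normm m = m.
Proof. by case: m => [[[a b] c] d] /= /andP[_ ->]. Qed.

Lemma normm_neg m : detm m = 1 -> normm (negm m) = normm m.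
Proof.
case: m => [[[a b] c] d] h; have := detm_cd_neq0 (m := (a, b, c, d)) h.
by rewrite /normm /negm; do 2 case: ifP; rewrite ?opprK //; lia.
Qed.

Lemma normm_mul_normm m s : detm m = 1 -> detm s = 1 ->
  normm (mulm m (normm s)) = normm (mulm m s).
Proof.
case: s => [[[a b] c] d] hm hs; rewrite {2}/normm; case: ifP => // _.
by rewrite mulmN normm_neg // detmM hm hs.
Qed.

(** * The stabiliser of z_q *)

(* the norm of d + c z_q *)
Definition normq (q : nat) (d c : int) : int := d * d + tq q * d * c + Nq q * c * c.

Definition stab_mat (q : nat) (p : int * int) : mat :=
  let: (d, c) := p in (tq q * c + d, - (Nq q * c), c, d).

Lemma mobm_fixed q (a b c d : int) : admissible_q q -> (c != 0) || (d != 0) ->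
  mobm (a, b, c, d) (zq q) = zq q <-> a = tq q * c + d /\ b = - (Nq q * c).
Proof.
move=> hq hcd; have hden := mob_den_neq0 (z := zq q) (lt0r_neq0 (lambda_gt0 hq)) hcd.
have hz := zq_sqr hq; move: hden hz; set z := zq q => hden hz.
have ez : z * (c%:~R * z + d%:~R) - (a%:~R * z + b%:~R) =
    ratr (- (Nq q * c) - b)%:~R + ratr (tq q * c + d - a)%:~R * z.
  rewrite !ratr_int !intrB !intrN !intrD !intrM.
  have -> : z * (c%:~R * z + d%:~R) = c%:~R * z ^+ 2 + d%:~R * z :> CC by ring.
  by rewrite hz; ring.
rewrite /mobm; split => [hfix | [ea eb]].
  move: ez; rewrite -{1}hfix divfK // subrr => /esym /(zq_coord_eq0 hq) [].
  by move/eqP; rewrite intr_eq0 => /eqP hb /eqP; rewrite intr_eq0 => /eqP ha; lia.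
move: ez; rewrite ea eb !subrr !ratr_int mul0r addr0 => /eqP; rewrite subr_eq0 => /eqP <-.
exact: mulfK.
Qed.

Definition srange (n : nat) : seq int := [seq i%:Z - n%:Z | i <- iota 0 n.*2.+1].

Lemma mem_srange n k : (k \in srange n) = (- n%:Z <= k <= n%:Z).
Proof.
apply/mapP/idP => [[i + ->]|hk]; first by rewrite mem_iota => /andP[_ hi]; lia.
by exists (absz (k + n%:Z)); rewrite ?mem_iota; lia.
Qed.

Lemma srange_uniq n : uniq (srange n).
Proof. by rewrite map_inj_uniq ?iota_uniq // => i j /addIr [->]. Qed.

Definition norm_one (q : nat) : seq (int * int) :=
  [seq p <- [seq (d, c) | d <- srange 1, c <- srange 1] | normq q p.1 p.2 == 1].

Lemma norm_one_uniq q : uniq (norm_one q).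
Proof.
by rewrite filter_uniq // allpairs_uniq ?srange_uniq // => -[? ?] [? ?] _ _ [-> ->].
Qed.

Lemma normq_one_bounds q (d c : int) : admissible_q q -> normq q d c = 1 ->
  (-1 <= d <= 1) && (-1 <= c <= 1).
Proof.
move=> hq hn; have [ht hN /andP[hq3 _]] := tq_Nq hq.
have h4 : (2 * d + tq q * c) ^+ 2 + q%:Z * c ^+ 2 = 4.
  have -> : (2 * d + tq q * c) ^+ 2 + q%:Z * c ^+ 2 = 4 * normq q d c
      + c ^+ 2 * (tq q * tq q - tq q) + c ^+ 2 * (q%:Z + tq q - 4 * Nq q) by rewrite /normq; ring.
  by rewrite tqK // hN hn !subrr !mulr0 !addr0.
have hc : c ^+ 2 <= 1 by nia.
have hd : (2 * d + tq q * c) ^+ 2 <= 4 by nia.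
by case: ht => ht; rewrite ht in hd; nia.
Qed.

Lemma mem_norm_one q (d c : int) : admissible_q q ->
  ((d, c) \in norm_one q) = (normq q d c == 1).
Proof.
move=> hq; rewrite mem_filter -[normq q _ _]/(normq q d c).
case: eqP => // /(normq_one_bounds hq) /andP[hd hc].
by apply/allpairsP; exists (d, c); rewrite /= !mem_srange.
Qed.

Definition sign_normal (p : int * int) : bool := (0 < p.2) || ((p.2 == 0) && (0 < p.1)).

Definition stab_mats (q : nat) : seq mat :=
  [seq stab_mat q p | p <- norm_one q & sign_normal p].

Lemma psl_stab_mat q p :
  psl_rep (stab_mat q p) = (normq q p.1 p.2 == 1) && sign_normal p.
Proof. by case: p => d c /=; congr ((_ == 1) && _); rewrite /normq; ring. Qed.

Lemma stab_mats_psl q : all psl_rep (stab_mats q).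
Proof.
apply/allP => _ /mapP[p + ->]; rewrite !mem_filter => /andP[hs /andP[hn _]].
by rewrite psl_stab_mat hn.
Qed.

Lemma stab_mats_uniq q : uniq (stab_mats q).
Proof.
rewrite map_inj_in_uniq ?filter_uniq ?norm_one_uniq //.
by move=> [d c] [d' c'] _ _ [_ _ -> ->].
Qed.

Lemma mem_stab_mats q m : admissible_q q -> psl_rep m ->
  m \in stab_mats q <-> mobm m (zq q) = zq q.
Proof.
move=> hq hm; have hcd := detm_cd_neq0 (psl_detm hm).
case: m hm hcd => [[[a b] c] d] hm hcd; rewrite mobm_fixed //; split.
  by case/mapP => -[d' c'] _ [-> -> -> ->].
move=> [ea eb]; apply/mapP; exists (d, c); last by rewrite /stab_mat -ea -eb.
case/andP: hm => /eqP hdet hsign; rewrite mem_filter mem_norm_one //.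
by apply/andP; split; [exact: hsign | apply/eqP; rewrite -hdet /normq ea eb; ring].
Qed.

Lemma sign_normal_neg (p : int * int) : p != (0, 0) ->
  sign_normal (- p.1, - p.2) = ~~ sign_normal p.
Proof. by case: p => d c; rewrite /sign_normal /= xpair_eqE; lia. Qed.

(* The solutions of the norm equation come in pairs {p, -p}, exactly one of
   which is sign-normalised. *)
Lemma size_norm_one q : admissible_q q -> size (norm_one q) = (2 * size (stab_mats q))%N.
Proof.
move=> hq; rewrite size_map size_filter mul2n -addnn.
set s := norm_one q; set negp := fun p : int * int => (- p.1, - p.2).
have negpK : involutive negp by move=> [d c]; rewrite /negp /= !opprK.
have hperm : perm_eq s (map negp s).
  apply: uniq_perm; rewrite ?map_inj_uniq ?norm_one_uniq //; first exact: inv_inj.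
  move=> [d c]; rewrite -{2}[(d, c)]negpK mem_map; last exact: inv_inj.
  by rewrite !mem_norm_one // /normq; congr (_ == _); ring.
rewrite -{1}(count_predC sign_normal s); congr (_ + _).
rewrite (permP hperm) count_map; apply: eq_in_count => -[d c].
rewrite mem_norm_one // => /eqP hn /=; rewrite sign_normal_neg ?negbK //.
by apply/eqP => -[d0 c0]; move: hn; rewrite d0 c0 /normq; lia.
Qed.

(** * The fibres of phi *)

Lemma has_card_psl (P : PSL2Z -> Prop) (s : seq mat) : uniq s -> all psl_rep s ->
  (forall g, P g <-> val g \in s) -> has_card P (size s).
Proof.
move=> hu hs hP; exists (pmap insub s); split; first exact: pmap_sub_uniq.
split; last by rewrite size_pmap_sub; apply/eqP; rewrite -all_count.
by move=> g; rewrite mem_pmap_sub hP.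
Qed.

Lemma card_Stab q : admissible_q q -> has_card (Stab q) (size (stab_mats q)).
Proof.
move=> hq; apply: has_card_psl; rewrite ?stab_mats_uniq ?stab_mats_psl // => g.
by rewrite /Stab mobE mem_stab_mats //; apply: valP.
Qed.

(* phi q g is convertible to Phi q (mob g (zq q)) *)
Definition Phi (q : nat) (w : CC) : CC :=
  ((2 * lambda q ^+ 2 * cosh_rho (zq q) w + 2 * lambda q ^+ 2)%:C)%C * fq q w.

Lemma Phi_formula q (w : CC) : admissible_q q -> 0 < complex.Im w ->
  Phi q w = Complex (2 * lambda q ^+ 2 * (complex.Re w - mu q) / complex.Im w)
    (lambda q * ((complex.Re w - mu q) ^+ 2 + complex.Im w ^+ 2 - lambda q ^+ 2) / complex.Im w).
Proof.
move=> hq hw; have hl := lambda_gt0 hq.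
rewrite /Phi /fq /cosh_rho /abs2 (complexE w) /zq.
move: (complex.Re w) (complex.Im w) (mu q) (lambda q) hw hl => x y m l hy hl.
have hD : (x - m) ^+ 2 + (y - - l) ^+ 2 != 0.
  have := sqr_ge0 (x - m); have : 0 < (y - - l) ^+ 2 by rewrite opprK exprn_gt0 // addr_gt0.
  by move=> *; apply: lt0r_neq0; lra.
by apply: complex_ext => /=; field; rewrite hD !lt0r_neq0.
Qed.

Lemma Phi_inj q (w1 w2 : CC) : admissible_q q -> 0 < complex.Im w1 -> 0 < complex.Im w2 ->
  Phi q w1 = Phi q w2 -> w1 = w2.
Proof.
move=> hq h1 h2; rewrite !Phi_formula // (complexE w1) (complexE w2) /= => e.
move: (congr1 (@complex.Re _) e) (congr1 (@complex.Im _) e) => /= {e}.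
move: (complex.Re w1) (complex.Im w1) (complex.Re w2) (complex.Im w2) h1 h2.
move: (mu q) (lambda q) (lambda_gt0 hq) => m l hl x1 y1 x2 y2 h1 h2 ere eim.
have hy1 := lt0r_neq0 h1; have hy2 := lt0r_neq0 h2; have hl0 := lt0r_neq0 hl.
set u := (x1 - m) / y1.
have hx1 : x1 - m = u * y1 by rewrite /u divfK.
have hx2 : x2 - m = u * y2.
  have -> : x2 - m = 2 * l ^+ 2 * (x2 - m) / y2 * y2 / (2 * l ^+ 2) by field; rewrite hy2 hl0.
  by rewrite -ere /u; field; rewrite hy1 hl0.
rewrite hx1 hx2 in eim.
(* the imaginary part of Phi is increasing in Im w along each ray Re w - mu = u Im w *)
have hy : (y1 - y2) * ((u ^+ 2 + 1) * y1 * y2 + l ^+ 2) = 0.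
  have -> : (y1 - y2) * ((u ^+ 2 + 1) * y1 * y2 + l ^+ 2) = y1 * y2 / l *
      (l * ((u * y1) ^+ 2 + y1 ^+ 2 - l ^+ 2) / y1 - l * ((u * y2) ^+ 2 + y2 ^+ 2 - l ^+ 2) / y2).
    by field; rewrite hy1 hy2 hl0.
  by rewrite eim subrr mulr0.
have hpos : 0 < (u ^+ 2 + 1) * y1 * y2 + l ^+ 2.
  by rewrite ltr_wpDr ?sqr_ge0 // !mulr_gt0 // ltr_wpDl ?sqr_ge0.
move/eqP: hy; rewrite mulf_eq0 (gt_eqF hpos) orbF subr_eq0 => /eqP ey.
by apply/complex_ext => //=; rewrite -(subrK m x1) hx1 ey -hx2 subrK.
Qed.

Definition fiber_mats (q : nat) (g : PSL2Z) : seq mat :=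
  [seq normm (mulm (val g) s) | s <- stab_mats q].

Lemma mem_stab_mats_psl q s : s \in stab_mats q -> psl_rep s.
Proof. exact/allP/stab_mats_psl. Qed.

Lemma mob_eq_fiber q (g g' : PSL2Z) : admissible_q q ->
  mob g' (zq q) = mob g (zq q) <-> val g' \in fiber_mats q g.
Proof.
move=> hq; have hz : 0 < complex.Im (zq q) := lambda_gt0 hq.
have dg := psl_detm (valP g); have dg' := psl_detm (valP g').
have [hgl hgr] := mul_adjm dg; rewrite !mobE; split => [e | /mapP[s hs ->]].
  set s := mulm (adjm (val g)) (val g').
  have ds : detm s = 1 by rewrite detmM detm_adj dg dg'.
  have hs : normm s \in stab_mats q.
    rewrite mem_stab_mats ?normm_psl // mobm_normm mobm_mul ?detm_adj // e.
    by rewrite -mobm_mul ?detm_adj // hgl mobm_id.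
  apply/mapP; exists (normm s) => //.
  by rewrite normm_mul_normm // -mulmA hgr mul1m normm_id //; apply: valP.
have hs' := mem_stab_mats_psl hs; have ds := psl_detm hs'.
by rewrite mobm_normm mobm_mul // (mem_stab_mats hq hs').1.
Qed.

Lemma fiber_mats_uniq q g : uniq (fiber_mats q g).
Proof.
rewrite map_inj_in_uniq ?stab_mats_uniq // => s1 s2 h1 h2 e.
have dg := psl_detm (valP g); have [hgl _] := mul_adjm dg.
suff back s : s \in stab_mats q -> normm (mulm (adjm (val g)) (normm (mulm (val g) s))) = s.
  by rewrite -(back _ h1) e back.
move=> hs; have hs' := mem_stab_mats_psl hs.
rewrite normm_mul_normm ?detmM ?detm_adj ?dg ?(psl_detm hs') //.
by rewrite -mulmA hgl mul1m normm_id.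
Qed.

Lemma fiber_mats_psl q g : all psl_rep (fiber_mats q g).
Proof.
apply/allP => _ /mapP[s hs ->]; apply: normm_psl.
by rewrite detmM (psl_detm (valP g)) (psl_detm (mem_stab_mats_psl hs)).
Qed.

Lemma card_phi_fiber q (g : PSL2Z) : admissible_q q ->
  has_card (fun g' => phi q g' = phi q g) (size (stab_mats q)).
Proof.
move=> hq; rewrite -(size_map (fun s => normm (mulm (val g) s))).
apply: has_card_psl; rewrite ?fiber_mats_uniq ?fiber_mats_psl // => g'.
rewrite -mob_eq_fiber //; split => [e|e]; last by rewrite /phi /Rq e.
have Im_gt0 h : 0 < complex.Im (mob h (zq q)).
  by rewrite mobE Im_mobm_gt0 ?(psl_detm (valP h)) ?lambda_gt0.
exact: (Phi_inj hq (Im_gt0 g') (Im_gt0 g) e).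
Qed.

(** * Algebraic integers of K *)

Lemma horner_quadratic (t N : int) (p : {poly int}) (a b : rat) :
  exists u v : rat, forall (F : numFieldType) (z : F), z ^+ 2 = t%:~R * z - N%:~R ->
    (map_poly (fun c : int => c%:~R : F) p).[ratr a + ratr b * z] = ratr u + ratr v * z.
Proof.
elim/poly_ind: p => [|p c [u [v IH]]].
  by exists 0, 0 => F z _; rewrite map_poly0 horner0 !rmorph0 mul0r addr0.
exists (u * a - N%:~R * v * b + c%:~R), (u * b + v * a + t%:~R * v * b) => F z hz.
rewrite rmorphD rmorphM /= map_polyX map_polyC hornerD hornerMX hornerC (IH F z hz).
rewrite !rmorphD !rmorphM !rmorphN /= !ratr_int !rmorphM /= !ratr_int.
have -> : (ratr u + ratr v * z) * (ratr a + ratr b * z) = ratr u * ratr a + 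
  (ratr u * ratr b + ratr v * ratr a) * z + ratr v * ratr b * z ^+ 2 :> F by ring.
by rewrite hz; ring.
Qed.

Lemma quadratic_trace_norm (R : comPzRingType) (t N a b z : R) : z ^+ 2 = t * z - N ->
  [/\ (a + b * z) + (a + b * (t - z)) = 2 * a + t * b,
      (a + b * z) * (t - z) + (a + b * (t - z)) * z = t * a + 2 * N * b &
      (a + b * z) * (a + b * (t - z)) = a * a + t * a * b + N * b * b].
Proof.
move=> hz; split; first by ring.
  have -> : (a + b * z) * (t - z) + (a + b * (t - z)) * z =
    t * a + 2 * N * b - 2 * b * (z ^+ 2 - (t * z - N)) by ring.
  by rewrite hz subrr mulr0 subr0.
have -> : (a + b * z) * (a + b * (t - z)) =
  a * a + t * a * b + N * b * b - b * b * (z ^+ 2 - (t * z - N)) by ring.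
by rewrite hz subrr mulr0 subr0.
Qed.

Lemma monic_quadratic (k n : int) : Poly [:: n; - k; 1] \is monic.
Proof. by rewrite monicE lead_coefE (PolyK (c := 0)) //= oner_neq0. Qed.

Lemma root_quadratic (F : numFieldType) (k n : int) (x : F) : x ^+ 2 = k%:~R * x - n%:~R ->
  root (map_poly (fun c : int => c%:~R : F) (Poly [:: n; - k; 1])) x.
Proof.
move=> hx; rewrite /root map_polyE (PolyK (c := 0)) ?oner_neq0 // horner_Poly /=.
by rewrite mul0r add0r mul1r intrN mulrDl -expr2 hx; apply/eqP; ring.
Qed.

(* the image of z_q under an embedding of K into algC *)
Definition zA (q : nat) : algC := ((tq q)%:~R + 'i * sqrtC q%:R) / 2.

Lemma zA_sqr q : admissible_q q -> zA q ^+ 2 = (tq q)%:~R * zA q - (Nq q)%:~R.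
Proof.
move=> hq; have [ht _ _] := tq_Nq hq.
rewrite Nq_intr // /zA; move: (sqrtCK (q%:R : algC)) (sqrCi algC).
move: (sqrtC (q%:R : algC)) => s <- hi.
have -> : (((tq q)%:~R + 'i * s) / 2) ^+ 2 = ((tq q)%:~R ^+ 2 + 2 * (tq q)%:~R * 'i * s + 'i ^+ 2 * s ^+ 2) / 4.
  by field.
by rewrite hi; case: ht => ->; field.
Qed.

Lemma conj_zA q : (zA q)^* = (tq q)%:~R - zA q.
Proof.
have hs : (sqrtC (q%:R : algC))^* = sqrtC q%:R by rewrite geC0_conj ?sqrtC_ge0 ?ler0n.
rewrite /zA rmorphM rmorphD rmorphM /= hs conjCi fmorphV rmorph_int rmorph_nat.
by field.
Qed.

Lemma alg_integer_Aint q (a b : rat) : admissible_q q ->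
  alg_integer (ratr a + ratr b * zq q) -> ratr a + ratr b * zA q \in Aint.
Proof.
move=> hq [p [hm hr]]; have [u [v huv]] := horner_quadratic (tq q) (Nq q) p a b.
apply: (root_monic_Aint (p := map_poly (fun c : int => c%:~R : algC) p)).
- move: hr; rewrite /root huv ?zq_sqr // => /eqP /(zq_coord_eq0 hq) [hu hv].
  by rewrite huv ?zA_sqr // hu hv !rmorph0 mul0r addr0.
- exact: monic_map.
- by apply/polyOverP => i; rewrite coef_map intr_int.
Qed.

Lemma Aint_ratr (r : rat) : (ratr r : algC) \in Aint -> r \is a Num.int.
Proof.
move/(Cint_rat_Aint (Crat_rat r))/intrP => [k hk]; apply/intrP; exists k.
by rewrite -(ratr_int algC k) in hk; apply: fmorph_inj hk.
Qed.

Lemma zA_Aint q : admissible_q q -> zA q \in Aint.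
Proof.
move=> hq; apply: (root_monic_Aint (root_quadratic (zA_sqr hq))).
  exact/monic_map/monic_quadratic.
by apply/polyOverP => i; rewrite coef_map intr_int.
Qed.

Lemma alg_integer_traces q (a b : rat) : admissible_q q ->
  alg_integer (ratr a + ratr b * zq q) ->
  [/\ 2 * a + (tq q)%:~R * b \is a Num.int,
      (tq q)%:~R * a + 2 * (Nq q)%:~R * b \is a Num.int &
      a * a + (tq q)%:~R * a * b + (Nq q)%:~R * b * b \is a Num.int].
Proof.
move=> hq /(alg_integer_Aint hq); set x := ratr a + ratr b * zA q => hx.
have hxc : x^* \in Aint by rewrite Aint_aut.
have hzc : (zA q)^* \in Aint by rewrite Aint_aut zA_Aint.
have ex : x^* = ratr a + ratr b * ((tq q)%:~R - zA q).
  by rewrite rmorphD fmorph_rat rmorphM fmorph_rat -conj_zA.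
have [e1 e2 e3] := quadratic_trace_norm (ratr a) (ratr b) (zA_sqr hq).
split; apply: Aint_ratr; rewrite !rmorphD !rmorphM ?rmorph_nat !rmorph_int.
- by rewrite -e1 -ex rpredD.
- by rewrite -e2 -ex -conj_zA; apply: rpredD; apply: rpredM; rewrite ?zA_Aint.
- by rewrite -e3 -ex rpredM.
Qed.

(** * The units of O_K *)

(* For a unit a + b z_q, k = 2 a + t b and u = q b are integers solving this
   equation; checking its finitely many solutions shows that a and b are integers. *)
Lemma disc_coords q (k u : int) : admissible_q q -> q%:Z * k ^+ 2 + u ^+ 2 = 4 * q%:Z ->
  exists d c : int, k = 2 * d + tq q * c /\ u = q%:Z * c.
Proof.
move=> hq e; have [_ _ /andP[hq3 hq163]] := tq_Nq hq.
have hk2 : k ^+ 2 <= 4 by nia.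
have hu2 : u ^+ 2 <= 652 by nia.
have hk : k \in srange 2 by rewrite mem_srange; apply/andP; split; nia.
have hu : u \in srange 25 by rewrite mem_srange; apply/andP; split; nia.
have /allP/(_ k hk)/allP/(_ u hu) : all (fun k => all (fun u =>
    (q%:Z * k ^+ 2 + u ^+ 2 != 4 * q%:Z) ||
    has (fun p => (k == 2 * p.1 + tq q * p.2) && (u == q%:Z * p.2))
      [seq (d, c) | d <- srange 1, c <- srange 1]) (srange 25)) (srange 2).
  by case_admissible hq; vm_compute.
by rewrite e eqxx orFb => /hasP[[d c] _ /andP[/eqP -> /eqP ->]]; exists d, c.
Qed.

Lemma disc_identities (R : comPzRingType) (t N q a b : R) : t * t = t -> 4 * N = q + t ->
  [/\ 2 * (t * a + 2 * N * b) - t * (2 * a + t * b) = q * b &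
      q * (2 * a + t * b) ^+ 2 + (q * b) ^+ 2 = 4 * q * (a * a + t * a * b + N * b * b)].
Proof.
move=> htt hN; have -> : q = 4 * N - t by rewrite hN addrK.
split.
  have -> : 2 * (t * a + 2 * N * b) - t * (2 * a + t * b) =
    (4 * N - t) * b - b * (t * t - t) by ring.
  by rewrite htt subrr mulr0 subr0.
have -> : (4 * N - t) * (2 * a + t * b) ^+ 2 + ((4 * N - t) * b) ^+ 2 =
  4 * (4 * N - t) * (a * a + t * a * b + N * b * b) + (4 * N - t) * b ^+ 2 * (t * t - t) by ring.
by rewrite htt subrr mulr0 addr0.
Qed.

Lemma abs2_coords q (a b : rat) : admissible_q q ->
  abs2 (ratr a + ratr b * zq q) = ratr (a * a + (tq q)%:~R * a * b + (Nq q)%:~R * b * b).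
Proof.
move=> hq; rewrite /abs2 /zq !ratrC /= (mu_tq hq) !rmorphD !rmorphM !rmorph_int.
rewrite (Nq_intr _ hq) !mul0r subr0 add0r addr0 exprMn lambda_sqr.
by case: (tq_Nq hq) => -[->|->] _ _; field.
Qed.

Lemma OK_unit_norm q (a b : rat) : admissible_q q -> OK_unit q (ratr a + ratr b * zq q) ->
  a * a + (tq q)%:~R * a * b + (Nq q)%:~R * b * b = 1.
Proof.
move=> hq [[_ hx] [hx0 [[a' [b' ex']] hx']]]; rewrite ex' in hx'.
have [_ _ /intrP[n hn]] := alg_integer_traces hq hx.
have [_ _ /intrP[n' hn']] := alg_integer_traces hq hx'.
have n_ge0 : 0 <= n.
  by have := abs2_ge0 (ratr a + ratr b * zq q); rewrite abs2_coords // hn ratr_int ler0z.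
have nn' : n * n' = 1.
  have := abs2M (ratr a + ratr b * zq q) (ratr a + ratr b * zq q)^-1.
  rewrite mulfV // ex' !abs2_coords // hn hn' !ratr_int -intrM /abs2 /= expr1n expr0n addr0.
  by move/eqP; rewrite -[X in X == _]/((1 : int)%:~R) eqr_int eq_sym => /eqP.
have n_neq0 : n != 0 by apply/eqP => n0; move: nn'; rewrite n0 mul0r.
have n'_ge1 : 1 <= n' by nia.
by rewrite hn (_ : n = 1) //; nia.
Qed.

Lemma int_coords q (a b : rat) (k1 k2 : int) : admissible_q q ->
  2 * a + (tq q)%:~R * b = k1%:~R -> (tq q)%:~R * a + 2 * (Nq q)%:~R * b = k2%:~R ->
  a * a + (tq q)%:~R * a * b + (Nq q)%:~R * b * b = 1 ->
  exists d c : int, a = d%:~R /\ b = c%:~R.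
Proof.
move=> hq hk1 hk2 hn; have [_ _ /andP[hq3 _]] := tq_Nq hq.
have htt : (tq q)%:~R * (tq q)%:~R = (tq q)%:~R :> rat by rewrite -intrM tqK.
have hN' : 4 * (Nq q)%:~R = q%:Z%:~R + (tq q)%:~R :> rat by rewrite Nq_intr //; field.
have [hb hdisc] := disc_identities a b htt hN'.
set u := 2 * k2 - tq q * k1.
have hu : u%:~R = q%:Z%:~R * b :> rat by rewrite -hb /u intrB !intrM -hk1 -hk2.
have [d [c [ek ec]]] : exists d c : int, k1 = 2 * d + tq q * c /\ u = q%:Z * c.
  apply: disc_coords => //; apply: (@intr_inj rat).
  by rewrite intrD !intrM hu -hk1 -!expr2 hdisc hn; ring.
have qn0 : q%:Z%:~R != 0 :> rat by rewrite intr_eq0; lia.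
have bc : b = c%:~R by apply: (mulfI qn0); rewrite -hu ec intrM.
have ad : a = d%:~R by move: hk1; rewrite ek bc intrD !intrM; lra.
by exists d, c.
Qed.

Lemma OK_unit_coords q x : admissible_q q -> OK_unit q x ->
  exists2 p, p \in norm_one q & x = p.1%:~R + p.2%:~R * zq q.
Proof.
move=> hq hx; case: (hx) => [[[a [b ex]] hint] _]; subst x.
have [/intrP[k1 hk1] /intrP[k2 hk2] _] := alg_integer_traces hq hint.
have hn := OK_unit_norm hq hx.
have [d [c [ad bc]]] := int_coords hq hk1 hk2 hn.
exists (d, c); last by rewrite ad bc !ratr_int.
rewrite mem_norm_one //; apply/eqP/(@intr_inj rat).
by rewrite /normq !intrD !intrM -ad -bc.
Qed.

Lemma OK_root_quadratic q (d c k n : int) (x : CC) : x = d%:~R + c%:~R * zq q ->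
  x ^+ 2 = k%:~R * x - n%:~R -> OK q x.
Proof.
move=> -> hx; split; first by exists d%:~R, c%:~R; rewrite !ratr_int.
by exists (Poly [:: n; - k; 1]); split; [exact: monic_quadratic | exact: root_quadratic].
Qed.

Lemma norm_one_OK_unit q (d c : int) : admissible_q q -> normq q d c = 1 ->
  OK_unit q (d%:~R + c%:~R * zq q).
Proof.
move=> hq hn; set x := d%:~R + c%:~R * zq q.
set xb : CC := (d + tq q * c)%:~R + (- c)%:~R * zq q.
have [e1 _ e3] := quadratic_trace_norm d%:~R c%:~R (zq_sqr hq).
have exb : d%:~R + c%:~R * ((tq q)%:~R - zq q) = xb by rewrite /xb intrD intrM intrN; ring.
rewrite -/x exb in e1; rewrite -/x exb -!intrM -!intrD -/(normq q d c) hn in e3.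
have sqr_trace y : y * (x + xb - y) = x * xb -> y ^+ 2 = (2 * d + tq q * c)%:~R * y - 1%:~R.
  move=> hy; have -> : y ^+ 2 = (x + xb) * y - y * (x + xb - y) by ring.
  by rewrite hy e1 e3 intrD !intrM; ring.
have hx0 : x != 0 by apply/eqP => x0; move: e3; rewrite x0 mul0r => /esym/eqP; rewrite intr_eq0.
split.
  apply: (OK_root_quadratic (k := 2 * d + tq q * c) (n := 1) erefl).
  by apply: sqr_trace; rewrite -/x [x + xb]addrC addrK.
split=> //; have -> : x^-1 = xb by apply: (mulfI hx0); rewrite mulfV // e3.
apply: (OK_root_quadratic (k := 2 * d + tq q * c) (n := 1) (c := - c) (d := d + tq q * c)) => //.
by apply: sqr_trace; rewrite addrK mulrC.
Qed.

Lemma card_OK_unit q : admissible_q q -> has_card (OK_unit q) (size (norm_one q)).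
Proof.
move=> hq; exists [seq p.1%:~R + p.2%:~R * zq q | p <- norm_one q]; split.
  rewrite map_inj_in_uniq ?norm_one_uniq // => -[d c] [d' c'] _ _.
  by move=> /= /(zq_coord_inj hq) [-> ->].
split; last by rewrite size_map.
move=> x; split => [/mapP[[d c] hp ->]|/(OK_unit_coords hq)[[d c] hp ->]].
  by move: hp; rewrite mem_norm_one // => /eqP; apply: norm_one_OK_unit.
exact: (map_f (fun p => p.1%:~R + p.2%:~R * zq q)).
Qed.

Theorem lemma2p3 (q : nat) (hq : admissible_q q) :
  exists n : nat,
    has_card (Stab q) n /\
    (forall w : CC, (exists g, phi q g = w) ->
        has_card (fun g => phi q g = w) n) /\
    has_card (OK_unit q) (2 * n)%N.
Proof.
exists (size (stab_mats q)); split; first exact: card_Stab.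
split; first by move=> w [g <-]; apply: card_phi_fiber.
by rewrite -size_norm_one //; apply: card_OK_unit.
Qed.
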